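(* Let $(X,T)$ be a transitive topological dynamical system such that $\operatorname{supp}(X,T)\ne\mathrm{Fix}(X,T^n)$ for every $n\in\mathbb{N}$. Then for every $x\in X$ the Banach proximal cell $BP(x)=\{y\in X:(x,y)\text{ is Banach proximal}\}$ has empty interior.
   Context: A topological dynamical system $(X,T)$ consists of a non-empty compact metric space $(X,d)$ and a continuous map $T:X\to X$. It is transitive if for all non-empty open $U,V\subset X$ the set $\{n\ge0: U\cap T^{-n}V\ne\emptyset\}$ is infinite. $\mathrm{Fix}(X,T^n)=\{x\in X: T^nx=x\}$. A set $F\subset\mathbb{Z}_+$ has Banach density one if for every $\lambda<1$ there is $N\ge1$ with $\#(F\cap I)\ge\lambda\,\#(I)$ for every interval of integers $I\subset\mathbb{Z}_+$ with $\#(I)\ge N$. A pair $(x,y)$ is Banach proximal if for every $\varepsilon>0$ the set $\{n\in\mathbb{Z}_+: d(T^nx,T^ny)<\varepsilon\}$ has Banach density one. $\operatorname{supp}(X,T)$ is the smallest closed set $C\subset X$ with $\mu(C)=1$ for all $T$-invariant Borel probability measures $\mu$. *)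

From Stdlib Require Import Reals List.
Open Scope R_scope.

Definition is_metric {X : Type} (d : X -> X -> R) : Prop :=
  (forall x y, 0 <= d x y) /\
  (forall x y, d x y = 0 <-> x = y) /\
  (forall x y, d x y = d y x) /\
  (forall x y z, d x z <= d x y + d y z).

Definition is_open {X : Type} (d : X -> X -> R) (U : X -> Prop) : Prop :=
  forall x, U x -> exists eps, 0 < eps /\ forall y, d x y < eps -> U y.

Definition is_closed {X : Type} (d : X -> X -> R) (C : X -> Prop) : Prop :=
  is_open d (fun x => ~ C x).

Definition is_compact {X : Type} (d : X -> X -> R) : Prop :=
  forall (I : Type) (U : I -> X -> Prop),
    (forall i, is_open d (U i)) ->
    (forall x, exists i, U i x) ->
    exists l : list I, forall x, exists i, In i l /\ U i x.

Definition is_continuous {X : Type} (d : X -> X -> R) (T : X -> X) : Prop :=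
  forall x eps, 0 < eps -> exists delta, 0 < delta /\
    forall y, d x y < delta -> d (T x) (T y) < eps.

Definition iterT {X : Type} (T : X -> X) (n : nat) (x : X) : X := Nat.iter n T x.

(* transitivity: N(U,V) = {n >= 0 : U ∩ T^{-n} V ≠ ∅} is infinite *)
Definition is_transitive {X : Type} (d : X -> X -> R) (T : X -> X) : Prop :=
  forall U V : X -> Prop, is_open d U -> is_open d V ->
    (exists x, U x) -> (exists x, V x) ->
    forall N : nat, exists n : nat, (N <= n)%nat /\ exists x, U x /\ V (iterT T n x).

Definition Fix {X : Type} (T : X -> X) (n : nat) (x : X) : Prop := iterT T n x = x.

Definition is_sigma_algebra {X : Type} (S : (X -> Prop) -> Prop) : Prop :=
  S (fun _ => True) /\
  (forall A, S A -> S (fun x => ~ A x)) /\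
  (forall A : nat -> X -> Prop, (forall n, S (A n)) -> S (fun x => exists n, A n x)).

Definition is_Borel {X : Type} (d : X -> X -> R) (B : X -> Prop) : Prop :=
  forall S : (X -> Prop) -> Prop, is_sigma_algebra S ->
    (forall U, is_open d U -> S U) -> S B.

(* mu is a Borel probability measure (values off the Borel sets are irrelevant) *)
Definition is_Borel_prob {X : Type} (d : X -> X -> R) (mu : (X -> Prop) -> R) : Prop :=
  (forall B, is_Borel d B -> 0 <= mu B) /\
  mu (fun _ => True) = 1 /\
  (forall B : nat -> X -> Prop,
     (forall n, is_Borel d (B n)) ->
     (forall m n x, m <> n -> B m x -> B n x -> False) ->
     infinite_sum (fun n => mu (B n)) (mu (fun x => exists n, B n x))).

Definition is_invariant_prob {X : Type} (d : X -> X -> R) (T : X -> X)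
  (mu : (X -> Prop) -> R) : Prop :=
  is_Borel_prob d mu /\
  forall B, is_Borel d B -> mu (fun x => B (T x)) = mu B.

(* supp(X,T): the smallest closed set of full measure for every invariant
   measure, written as the intersection of all such closed sets. *)
Definition supp {X : Type} (d : X -> X -> R) (T : X -> X) (x : X) : Prop :=
  forall C : X -> Prop, is_closed d C ->
    (forall mu, is_invariant_prob d T mu -> mu C = 1) -> C x.

Definition banach_density_one (F : nat -> Prop) : Prop :=
  forall lambda : R, lambda < 1 ->
    exists N : nat, (1 <= N)%nat /\
      forall a L : nat, (N <= L)%nat ->
        exists l : list nat, NoDup l /\
          (forall k, In k l -> (a <= k < a + L)%nat /\ F k) /\
          lambda * INR L <= INR (length l).

Definition banach_proximal {X : Type} (d : X -> X -> R) (T : X -> X) (x y : X) : Prop :=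
  forall eps, 0 < eps ->
    banach_density_one (fun n => d (iterT T n x) (iterT T n y) < eps).

Definition BP {X : Type} (d : X -> X -> R) (T : X -> X) (x : X) (y : X) : Prop :=
  banach_proximal d T x y.

Definition empty_interior {X : Type} (d : X -> X -> R) (A : X -> Prop) : Prop :=
  forall U : X -> Prop, is_open d U -> (forall y, U y -> A y) -> forall y, ~ U y.

(* Let (X, T) be transitive and suppose an open set U ≠ ∅ lies in BP(x).
   Transitivity gives n >= 1 and a nonempty open W = U ∩ T^-n U; for y in W
   both y and T^n y are Banach proximal to x, so the times k at which
   d(T^k y, T^(k+n) y) is small have Banach density one.  By Baire's theorem
   these density bounds are uniform on some ball, and transitivity transfers
   them to every point of X (an orbit is shadowed by an orbit from the ball).
   Averaging over an invariant measure then shows that the set of points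
   moved by T^n is null for every invariant measure, whence
   supp(X, T) ⊆ Fix(X, T^n).  Conversely every T^n-fixed point carries the
   invariant orbit measure, so Fix(X, T^n) ⊆ supp(X, T): the two sets agree,
   contradicting the hypothesis. *)

From Stdlib Require Import Reals List Lia Lra.
From Stdlib Require Import Classical ClassicalEpsilon FunctionalExtensionality PropExtensionality.
Open Scope R_scope.

Definition indn (P : Prop) : nat := if excluded_middle_informative P then 1%nat else 0%nat.
Definition indR (P : Prop) : R := if excluded_middle_informative P then 1 else 0.

Lemma indR_true (P : Prop) : P -> indR P = 1.
Proof. intros HP; unfold indR; destruct excluded_middle_informative; tauto. Qed.

Lemma indR_false (P : Prop) : ~ P -> indR P = 0.
Proof. intros HP; unfold indR; destruct excluded_middle_informative; tauto. Qed.

Lemma indR_bounds (P : Prop) : 0 <= indR P <= 1.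
Proof. unfold indR; destruct excluded_middle_informative; lra. Qed.

Ltac seteq := apply functional_extensionality; intro; apply propositional_extensionality.

(** Counting in windows of integers *)

Fixpoint count_in (P : nat -> Prop) (a L : nat) : nat :=
  match L with
  | O => O
  | S L' => (indn (P a) + count_in P (S a) L')%nat
  end.

Lemma count_in_shift_mono (P Q : nat -> Prop) L : forall a b,
  (forall i, (i < L)%nat -> P (a + i)%nat -> Q (b + i)%nat) ->
  (count_in P a L <= count_in Q b L)%nat.
Proof.
  induction L as [|L IH]; intros a b H; simpl; [lia|].
  assert (Htail : (count_in P (S a) L <= count_in Q (S b) L)%nat).
  { apply IH; intros i Hi Hp.
    replace (S b + i)%nat with (b + S i)%nat by lia.
    apply H; [lia|]. now replace (a + S i)%nat with (S a + i)%nat by lia. }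
  assert (Hhead : (indn (P a) <= indn (Q b))%nat).
  { unfold indn; destruct (excluded_middle_informative (P a)) as [p|p];
      destruct (excluded_middle_informative (Q b)) as [q|q]; try lia.
    exfalso; apply q. rewrite <- (Nat.add_0_r b).
    apply H; [lia|]. now rewrite Nat.add_0_r. }
  lia.
Qed.

Lemma count_in_mono (P Q : nat -> Prop) L a :
  (forall k, P k -> Q k) -> (count_in P a L <= count_in Q a L)%nat.
Proof. intros H; apply count_in_shift_mono; auto. Qed.

Lemma count_in_compl (P : nat -> Prop) L : forall a,
  (count_in P a L + count_in (fun k => ~ P k) a L = L)%nat.
Proof.
  induction L as [|L IH]; intros a; simpl; [lia|]. specialize (IH (S a)).
  unfold indn; destruct (excluded_middle_informative (P a));
    destruct (excluded_middle_informative (~ P a)); tauto || lia.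
Qed.

Lemma count_in_compl_INR (P : nat -> Prop) L a :
  INR (count_in P a L) = INR L - INR (count_in (fun k => ~ P k) a L).
Proof. rewrite <- (count_in_compl P L a) at 2. rewrite plus_INR. ring. Qed.

Lemma count_in_or (P Q : nat -> Prop) L : forall a,
  (count_in (fun k => P k \/ Q k) a L <= count_in P a L + count_in Q a L)%nat.
Proof.
  induction L as [|L IH]; intros a; simpl; [lia|]. specialize (IH (S a)).
  unfold indn; destruct (excluded_middle_informative (P a \/ Q a));
    destruct (excluded_middle_informative (P a));
    destruct (excluded_middle_informative (Q a)); try lia; tauto.
Qed.

Lemma NoDup_length_le_count_in (P : nat -> Prop) (l : list nat) a L :
  NoDup l -> (forall k, In k l -> (a <= k < a + L)%nat /\ P k) ->
  (length l <= count_in P a L)%nat.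
Proof.
  intros Hnd Hin.
  set (p := fun k => if excluded_middle_informative (P k) then true else false).
  assert (Hcount : forall a, count_in P a L = length (filter p (seq a L))).
  { clear Hin; induction L as [|L IH]; intros b; simpl; [auto|].
    rewrite IH; unfold indn, p; destruct (excluded_middle_informative (P b)); auto. }
  rewrite Hcount. apply NoDup_incl_length; auto.
  intros k Hk. destruct (Hin k Hk) as [Hr Hp]. apply filter_In. split.
  - apply in_seq. lia.
  - unfold p; destruct excluded_middle_informative; tauto.
Qed.

Lemma banach_density_one_count (F : nat -> Prop) : banach_density_one F ->
  forall lambda, lambda < 1 -> exists N, forall a L, (N <= L)%nat ->
    lambda * INR L <= INR (count_in F a L).
Proof.
  intros H lam Hl. destruct (H lam Hl) as [N [_ HN]]. exists N.
  intros a L HL. destruct (HN a L HL) as [l [Hnd [Hin Hle]]].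
  eapply Rle_trans; [exact Hle|]. apply le_INR, NoDup_length_le_count_in; auto.
Qed.

Fixpoint rsum (f : nat -> R) (L : nat) : R :=
  match L with
  | O => 0
  | S L' => f 0%nat + rsum (fun k => f (S k)) L'
  end.

Lemma rsum_const c L : rsum (fun _ => c) L = INR L * c.
Proof. induction L as [|L IH]; simpl rsum; [simpl; lra|]. rewrite IH, S_INR. lra. Qed.

Lemma rsum_plus L : forall f g, rsum (fun k => f k + g k) L = rsum f L + rsum g L.
Proof.
  induction L as [|L IH]; intros f g; simpl; [lra|].
  rewrite (IH (fun k => f (S k)) (fun k => g (S k))). lra.
Qed.

Lemma rsum_ext L : forall f g,
  (forall k, (k < L)%nat -> f k = g k) -> rsum f L = rsum g L.
Proof.
  induction L as [|L IH]; intros f g H; simpl; auto.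
  rewrite (H 0%nat) by lia. f_equal. apply IH. intros k Hk; apply H; lia.
Qed.

Lemma rsum_last L : forall f, rsum f (S L) = rsum f L + f L.
Proof.
  induction L as [|L IH]; intros f; simpl; [lra|].
  simpl in IH. rewrite (IH (fun k => f (S k))). lra.
Qed.

Lemma rsum_le L : forall f g, (forall k, f k <= g k) -> rsum f L <= rsum g L.
Proof.
  induction L as [|L IH]; intros f g H; simpl; [lra|].
  pose proof (H 0%nat). pose proof (IH (fun k => f (S k)) (fun k => g (S k)) (fun k => H (S k))).
  lra.
Qed.

Lemma rsum_indR_bounds L (P : nat -> Prop) : 0 <= rsum (fun i => indR (P i)) L <= INR L.
Proof.
  rewrite <- (Rmult_1_r (INR L)), <- rsum_const.
  replace 0 with (rsum (fun _ => 0) L) by (rewrite rsum_const; ring).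
  split; apply rsum_le; intros k; apply indR_bounds.
Qed.

Lemma inf_sum_zero : infinite_sum (fun _ => 0) 0.
Proof.
  intros eps He; exists 0%nat; intros n _.
  assert (Hz : sum_f_R0 (fun _ => 0) n = 0) by (induction n; simpl; lra).
  rewrite Hz; unfold Rdist; rewrite Rminus_diag, Rabs_R0; lra.
Qed.

Lemma inf_sum_plus a b la lb : infinite_sum a la -> infinite_sum b lb ->
  infinite_sum (fun i => a i + b i) (la + lb).
Proof.
  intros Ha Hb eps He. destruct (CV_plus _ _ _ _ Ha Hb eps He) as [N HN].
  exists N. intros n Hn.
  replace (sum_f_R0 (fun i => a i + b i) n) with (sum_f_R0 a n + sum_f_R0 b n).
  - apply HN; auto.
  - clear Hn HN; induction n; simpl; [lra|]. rewrite <- IHn. lra.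
Qed.

Lemma inf_sum_scal a la c : infinite_sum a la -> infinite_sum (fun i => c * a i) (c * la).
Proof.
  intros Ha. assert (Hc : Un_cv (fun _ => c) c).
  { intros eps He; exists 0%nat; intros; unfold Rdist; rewrite Rminus_diag, Rabs_R0; lra. }
  intros eps He. destruct (CV_mult _ _ _ _ Hc Ha eps He) as [N HN].
  exists N. intros n Hn.
  replace (sum_f_R0 (fun i => c * a i) n) with (c * sum_f_R0 a n).
  - apply HN; auto.
  - clear Hn HN; induction n; simpl; [lra|]. rewrite <- IHn. lra.
Qed.

Lemma inf_sum_const c : infinite_sum (fun _ => c) c -> c = 0.
Proof.
  intros H. destruct (Req_dec c 0) as [|Hc]; auto. exfalso.
  assert (He : Rabs c / 2 > 0) by (pose proof (Rabs_pos_lt c Hc); lra).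
  destruct (H _ He) as [N HN].
  pose proof (HN N (le_n _)) as H1. pose proof (HN (S N) (le_S _ _ (le_n _))) as H2.
  unfold Rdist in *. simpl sum_f_R0 in H2.
  set (s := sum_f_R0 (fun _ => c) N) in *.
  assert (Rabs c <= Rabs (s + c - c) + Rabs (s - c)).
  { replace c with ((s + c - c) - (s - c)) at 1 by ring. unfold Rminus at 1.
    eapply Rle_trans; [apply Rabs_triang|]. rewrite Rabs_Ropp. lra. }
  lra.
Qed.

Lemma inf_sum_rsum n : forall (g : nat -> nat -> R) (h : nat -> R),
  (forall i, infinite_sum (g i) (h i)) ->
  infinite_sum (fun j => rsum (fun i => g i j) n) (rsum h n).
Proof.
  induction n as [|n IH]; intros g h H; simpl.
  - apply inf_sum_zero.
  - apply inf_sum_plus; [auto|]. apply (IH (fun i => g (S i)) (fun i => h (S i))); auto.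
Qed.

Lemma partial_sum_exclusive_indicators (B : nat -> Prop) :
  (forall m n, m <> n -> B m -> B n -> False) ->
  forall n, sum_f_R0 (fun j => indR (B j)) n = indR (exists j, (j <= n)%nat /\ B j).
Proof.
  intros Hdis n; induction n as [|n IH]; simpl.
  - destruct (classic (B 0%nat)) as [H|H].
    + rewrite !indR_true; [reflexivity|exists 0%nat; auto|exact H].
    + rewrite !indR_false; [reflexivity| |exact H]. intros [j [Hj Hb]]; apply H; assert (j = 0%nat) as -> by lia; exact Hb.
  - rewrite IH. destruct (classic (B (S n))) as [Hs|Hs].
    + rewrite (indR_false (exists j, _)), !indR_true; [lra|exists (S n); auto|exact Hs|].
      intros [j [Hj Hb]]. apply (Hdis j (S n)); auto; lia.
    + rewrite (indR_false (B (S n))) by auto. rewrite Rplus_0_r. f_equal.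
      apply propositional_extensionality. split; intros [j [Hj Hb]]; exists j; split; auto.
      destruct (Nat.eq_dec j (S n)) as [->|]; [contradiction|lia].
Qed.

(* The indicator series of mutually exclusive propositions sums to the
   indicator of their disjunction: the countable additivity of Dirac masses. *)
Lemma inf_sum_exclusive_indicators (B : nat -> Prop) :
  (forall m n, m <> n -> B m -> B n -> False) ->
  infinite_sum (fun j => indR (B j)) (indR (exists j, B j)).
Proof.
  intros Hdis eps Heps. destruct (classic (exists j, B j)) as [[j0 Hj0]|Hno].
  - exists j0; intros n Hn.
    rewrite partial_sum_exclusive_indicators, !indR_true by eauto.
    unfold Rdist; rewrite Rminus_diag, Rabs_R0; lra.
  - exists 0%nat; intros n _.
    rewrite partial_sum_exclusive_indicators, !indR_false by firstorder.
    unfold Rdist; rewrite Rminus_diag, Rabs_R0; lra.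
Qed.

(** Metric topology and compactness *)

Section MetricTopology.

Variables (X : Type) (d : X -> X -> R).
Hypothesis Hmetric : is_metric d.

Lemma ball_open c r : is_open d (fun y => d c y < r).
Proof.
  destruct Hmetric as [_ [_ [_ Htri]]]. intros x Hx.
  exists (r - d c x); split; [lra|].
  intros y Hy. pose proof (Htri c x y). lra.
Qed.

Lemma closed_ball_closed c r : is_closed d (fun y => d c y <= r).
Proof.
  destruct Hmetric as [_ [_ [Hsym Htri]]]. intros x Hx.
  exists (d c x - r); split; [lra|].
  intros y Hy Hc. pose proof (Htri c y x). rewrite (Hsym y x) in H. lra.
Qed.

Lemma ball_center c r : 0 < r -> d c c < r.
Proof. destruct Hmetric as [_ [Hsep _]]. now rewrite (proj2 (Hsep c c) eq_refl). Qed.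

Lemma open_and (A B : X -> Prop) :
  is_open d A -> is_open d B -> is_open d (fun y => A y /\ B y).
Proof.
  intros HA HB y [Ha Hb].
  destruct (HA y Ha) as [e1 [He1 H1]]; destruct (HB y Hb) as [e2 [He2 H2]].
  exists (Rmin e1 e2); split; [apply Rmin_glb_lt; auto|]. intros z Hz. split.
  - apply H1. eapply Rlt_le_trans; [exact Hz|apply Rmin_l].
  - apply H2. eapply Rlt_le_trans; [exact Hz|apply Rmin_r].
Qed.

Lemma finite_delta (Q : nat -> X -> Prop) x L :
  (forall k, (k < L)%nat -> exists delta, 0 < delta /\ forall y, d x y < delta -> Q k y) ->
  exists delta, 0 < delta /\ forall y, d x y < delta -> forall k, (k < L)%nat -> Q k y.
Proof.
  induction L as [|L IH]; intros H.
  - exists 1; split; [lra|]. intros; lia.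
  - destruct IH as [d1 [Hd1 H1]]; [intros k Hk; apply H; lia|].
    destruct (H L (le_n _)) as [d2 [Hd2 H2]].
    exists (Rmin d1 d2); split; [apply Rmin_glb_lt; auto|].
    intros y Hy k Hk. destruct (Nat.eq_dec k L) as [->|].
    + apply H2. eapply Rlt_le_trans; [exact Hy|apply Rmin_r].
    + apply H1; [eapply Rlt_le_trans; [exact Hy|apply Rmin_l]|lia].
Qed.

Hypothesis Hcpt : is_compact d.

Lemma nested_closed_inter (K : nat -> X -> Prop) :
  (forall k, is_closed d (K k)) -> (forall k, exists x, K k x) ->
  (forall k x, K (S k) x -> K k x) ->
  exists x, forall k, K k x.
Proof.
  intros Hcl Hne Hnest. apply NNPP; intros Hno.
  assert (Hcov : forall x, exists k, ~ K k x).
  { intros x. apply NNPP; intros H. apply Hno. exists x. intros k.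
    apply NNPP. intros H'. apply H; eauto. }
  destruct (Hcpt nat (fun k x => ~ K k x) Hcl Hcov) as [l Hl].
  destruct (Hne (list_max l)) as [y Hy]. destruct (Hl y) as [i [Hi Hni]].
  assert (Hle : (i <= list_max l)%nat).
  { assert (H := proj1 (list_max_le l (list_max l)) (le_n _)).
    rewrite Forall_forall in H. auto. }
  apply Hni. clear Hi Hl Hni. induction Hle; auto.
Qed.

Lemma shrink_ball_avoiding (E : X -> Prop) c r :
  is_closed d E -> 0 < r -> ~ (forall y, d c y < r -> E y) ->
  exists c' r', 0 < r' /\ forall y, d c' y <= r' -> d c y < r /\ ~ E y.
Proof.
  destruct Hmetric as [_ [_ [_ Htri]]].
  intros HE Hr Hnot.
  assert (Hz : exists z, d c z < r /\ ~ E z).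
  { apply NNPP; intros Hz. apply Hnot. intros y Hy. apply NNPP; intros Hy'. apply Hz; eauto. }
  destruct Hz as [z [Hz1 Hz2]]. destruct (HE z Hz2) as [de [Hde Hd]].
  assert (Hm : 0 < Rmin de (r - d c z)) by (apply Rmin_glb_lt; lra).
  pose proof (Rmin_l de (r - d c z)). pose proof (Rmin_r de (r - d c z)).
  exists z, (Rmin de (r - d c z) / 2). split; [lra|]. intros y Hy. split.
  - pose proof (Htri c z y); lra.
  - apply Hd. lra.
Qed.

Lemma baire (O : X -> Prop) (E : nat -> X -> Prop) :
  is_open d O -> (exists x, O x) -> (forall N, is_closed d (E N)) ->
  (forall x, O x -> exists N, E N x) ->
  exists N c r, 0 < r /\ forall y, d c y < r -> E N y.
Proof.
  intros HO [x0 Hx0] HE Hcov. apply NNPP; intros Hno.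
  (* a strictly nested sequence of closed balls, the k-th one avoiding E k *)
  assert (Hstep : forall k (p : X * R), exists q : X * R, 0 < snd p ->
     0 < snd q /\ forall y, d (fst q) y <= snd q -> d (fst p) y < snd p /\ ~ E k y).
  { intros k [c r]. destruct (Rlt_dec 0 r) as [Hr|Hr]; [|exists (c, r); simpl; lra].
    destruct (shrink_ball_avoiding (E k) c r (HE k) Hr) as [c' [r' Hball]].
    - intros Hin. apply Hno. exists k, c, r. auto.
    - exists (c', r'). auto. }
  set (step := fun k p => proj1_sig (constructive_indefinite_description _ (Hstep k p))).
  assert (Hstep' : forall k p, 0 < snd p -> 0 < snd (step k p) /\
     (forall y, d (fst (step k p)) y <= snd (step k p) -> d (fst p) y < snd p /\ ~ E k y))
    by (intros k p; exact (proj2_sig (constructive_indefinite_description _ (Hstep k p)))).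
  destruct (HO x0 Hx0) as [e0 [He0 Hball]].
  set (ball_seq := fix ball_seq k := match k with
                     | O => (x0, e0) | S k' => step k' (ball_seq k') end).
  assert (Hpos : forall k, 0 < snd (ball_seq k)).
  { induction k; simpl; auto. apply Hstep'; auto. }
  destruct (nested_closed_inter (fun k y => d (fst (ball_seq k)) y <= snd (ball_seq k)))
    as [p Hp].
  - intros k; apply closed_ball_closed.
  - intros k; exists (fst (ball_seq k)). apply Rlt_le, ball_center, Hpos.
  - intros k y Hy. apply Rlt_le, (Hstep' k (ball_seq k) (Hpos k)); auto.
  - destruct (Hcov p) as [N HN].
    + apply Hball. apply (Hstep' 0%nat (ball_seq 0%nat) (Hpos 0%nat)). apply (Hp 1%nat).
    + apply (proj2 (Hstep' N (ball_seq N) (Hpos N)) p (Hp (S N))). auto.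
Qed.

End MetricTopology.

(** Borel sets and probability measures *)

Section Measures.

Variables (X : Type) (d : X -> X -> R).

Lemma Borel_open U : is_open d U -> is_Borel d U.
Proof. intros HU S HS Ho. auto. Qed.

Lemma Borel_True : is_Borel d (fun _ : X => True).
Proof. intros S HS Ho. apply HS. Qed.

Lemma Borel_False : is_Borel d (fun _ : X => False).
Proof. apply Borel_open. intros x []. Qed.

Lemma Borel_compl A : is_Borel d A -> is_Borel d (fun x => ~ A x).
Proof. intros HA S HS Ho. apply HS. apply HA; auto. Qed.

Lemma Borel_or A B : is_Borel d A -> is_Borel d B -> is_Borel d (fun x => A x \/ B x).
Proof.
  intros HA HB S HS Ho.
  replace (fun x => A x \/ B x) with (fun x => exists n, (match n with O => A | _ => B end) x).
  - apply HS. intros [|n]; [apply HA|apply HB]; auto.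
  - seteq. split.
    + intros [[|n] Hn]; auto.
    + intros [H|H]; [exists 0%nat|exists 1%nat]; auto.
Qed.

Lemma Borel_and A B : is_Borel d A -> is_Borel d B -> is_Borel d (fun x => A x /\ B x).
Proof.
  intros HA HB.
  replace (fun x => A x /\ B x) with (fun x => ~ (~ A x \/ ~ B x)).
  - apply Borel_compl, Borel_or; apply Borel_compl; auto.
  - seteq. split; [intros H; apply not_or_and in H; destruct H; split; apply NNPP; auto|tauto].
Qed.

Variable mu : (X -> Prop) -> R.
Hypothesis Hmu : is_Borel_prob d mu.

Lemma mu_nonneg A : is_Borel d A -> 0 <= mu A.
Proof. destruct Hmu as [H _]; auto. Qed.

Lemma mu_empty : mu (fun _ => False) = 0.
Proof.
  destruct Hmu as [_ [_ Hadd]].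
  specialize (Hadd (fun _ _ => False) (fun _ => Borel_False) ltac:(tauto)).
  cbv beta in Hadd.
  replace (fun x : X => exists n : nat, False) with (fun _ : X => False) in Hadd.
  - exact (inf_sum_const _ Hadd).
  - seteq. split; [tauto|intros [_ []]].
Qed.

(* Finite additivity, from countable additivity padded with empty sets. *)
Lemma mu_add A B : is_Borel d A -> is_Borel d B -> (forall x, A x -> B x -> False) ->
  mu (fun x => A x \/ B x) = mu A + mu B.
Proof.
  intros HA HB Hd. destruct Hmu as [_ [_ Hadd]].
  set (F := fun n => match n with O => A | 1%nat => B | _ => fun _ : X => False end).
  assert (Hs : infinite_sum (fun n => mu (F n)) (mu (fun x => exists n, F n x))).
  { apply Hadd.
    - intros [|[|n]]; simpl; auto using Borel_False.
    - intros [|[|m]] [|[|n]] x Hmn; simpl; try tauto; try (intros; eauto); lia. }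
  replace (fun x => exists n, F n x) with (fun x => A x \/ B x) in Hs.
  - eapply uniqueness_sum; [exact Hs|]. intros eps Heps. exists 1%nat. intros n Hn.
    assert (Hpart : sum_f_R0 (fun n => mu (F n)) n = mu A + mu B).
    { induction n as [|n IH]; [lia|]. destruct n; [simpl; auto|].
      simpl sum_f_R0 in *. rewrite IH by lia. simpl. rewrite mu_empty. ring. }
    rewrite Hpart; unfold Rdist; rewrite Rminus_diag, Rabs_R0; lra.
  - seteq. split.
    + intros [H|H]; [exists 0%nat|exists 1%nat]; auto.
    + intros [[|[|n]] Hn]; simpl in Hn; tauto.
Qed.

Lemma mu_split A S : is_Borel d A -> is_Borel d S ->
  mu A = mu (fun x => A x /\ S x) + mu (fun x => A x /\ ~ S x).
Proof.
  intros HA HS. rewrite <- mu_add.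
  - f_equal. seteq. destruct (classic (S x)); tauto.
  - apply Borel_and; auto.
  - apply Borel_and; auto. apply Borel_compl; auto.
  - tauto.
Qed.

(* This replaces integrating the counting function. *)
Lemma measure_multiplicity_bound L : forall (A : nat -> X -> Prop),
  (forall k, is_Borel d (A k)) ->
  forall (m : R) (D : X -> Prop), is_Borel d D ->
  (forall w, D w -> INR (count_in (fun k => A k w) 0 L) <= m) ->
  rsum (fun k => mu (fun w => A k w /\ D w)) L <= m * mu D.
Proof.
  induction L as [|L IH]; intros A HA m D HD Hc.
  - simpl. destruct (Rle_dec 0 m).
    + pose proof (mu_nonneg D HD). nra.
    + replace D with (fun _ : X => False); [rewrite mu_empty; lra|].
      seteq. split; [tauto|]. intros Hx. specialize (Hc _ Hx). simpl in Hc. lra.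
  -
    set (D1 := fun w => A 0%nat w /\ D w). set (D2 := fun w => ~ A 0%nat w /\ D w).
    assert (HB1 : is_Borel d D1) by (apply Borel_and; auto).
    assert (HB2 : is_Borel d D2) by (apply Borel_and; auto; apply Borel_compl; auto).
    assert (Hsplit : forall B, is_Borel d B ->
              mu (fun w => B w /\ D w) = mu (fun w => B w /\ D1 w) + mu (fun w => B w /\ D2 w)).
    { intros B HBB. rewrite (mu_split _ (A 0%nat)); auto; [|apply Borel_and; auto].
      unfold D1, D2. f_equal; f_equal; seteq; tauto. }
    assert (Hcount : forall w, count_in (fun k => A k w) 0 (S L) =
              (indn (A 0%nat w) + count_in (fun k => A (S k) w) 0 L)%nat).
    { intros w. simpl. f_equal. apply Nat.le_antisymm; apply count_in_shift_mono; auto. }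
    (* points of D1 are counted once already, points of D2 are not *)
    assert (HI1 : rsum (fun k => mu (fun w => A (S k) w /\ D1 w)) L <= (m - 1) * mu D1).
    { apply IH; auto. intros w [Ha Hd]. specialize (Hc w Hd). rewrite Hcount, plus_INR in Hc.
      unfold indn in Hc. destruct excluded_middle_informative; [simpl in Hc; lra|tauto]. }
    assert (HI2 : rsum (fun k => mu (fun w => A (S k) w /\ D2 w)) L <= m * mu D2).
    { apply IH; auto. intros w [Ha Hd]. specialize (Hc w Hd). rewrite Hcount in Hc.
      unfold indn in Hc. destruct excluded_middle_informative; [tauto|simpl in Hc; lra]. }
    simpl rsum. rewrite (rsum_ext _ _ _ (fun k _ => Hsplit (A (S k)) (HA (S k)))), rsum_plus.
    rewrite (mu_split D (A 0%nat)); auto. fold D1. fold D2.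
    replace (fun x => D x /\ A 0%nat x) with D1 by (seteq; unfold D1; tauto).
    replace (fun x => D x /\ ~ A 0%nat x) with D2 by (seteq; unfold D2; tauto).
    lra.
Qed.

End Measures.

(** Iterates of a continuous map *)

Section Dynamics.

Variables (X : Type) (d : X -> X -> R) (T : X -> X).
Hypothesis Hmetric : is_metric d.
Hypothesis Hcont : is_continuous d T.

Lemma iter_add k m z : iterT T k (iterT T m z) = iterT T (k + m) z.
Proof. unfold iterT. rewrite Nat.iter_add. reflexivity. Qed.

Lemma iter_comm k m z : iterT T k (iterT T m z) = iterT T m (iterT T k z).
Proof. rewrite !iter_add, Nat.add_comm. reflexivity. Qed.

Lemma iter_cont k : forall x eps, 0 < eps ->
  exists delta, 0 < delta /\ forall y, d x y < delta -> d (iterT T k x) (iterT T k y) < eps.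
Proof.
  induction k as [|k IH]; intros x eps He.
  - exists eps; split; auto.
  - destruct (Hcont (iterT T k x) eps He) as [d1 [Hd1 H1]].
    destruct (IH x d1 Hd1) as [d2 [Hd2 H2]].
    exists d2; split; auto. intros y Hy. apply H1, H2, Hy.
Qed.

Lemma preimage_open k V : is_open d V -> is_open d (fun y => V (iterT T k y)).
Proof.
  intros HV x Hx. destruct (HV _ Hx) as [e [He H]].
  destruct (iter_cont k x e He) as [de [Hde H2]]. exists de; split; auto.
Qed.

Definition displaced (n : nat) (r : R) (y : X) : Prop := r < d y (iterT T n y).

Lemma displaced_open n r : is_open d (displaced n r).
Proof.
  destruct Hmetric as [_ [_ [Hsym Htri]]].
  intros y Hy. unfold displaced in Hy. set (g := d y (iterT T n y) - r).
  destruct (iter_cont n y (g / 2)) as [d1 [Hd1 H1]]; [unfold g; lra|].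
  exists (Rmin d1 (g / 2)); split; [apply Rmin_glb_lt; unfold g; lra|]. intros y' Hy'.
  pose proof (Rmin_l d1 (g / 2)). pose proof (Rmin_r d1 (g / 2)).
  specialize (H1 y' ltac:(lra)). unfold displaced.
  pose proof (Htri y y' (iterT T n y)).
  pose proof (Htri y' (iterT T n y') (iterT T n y)).
  rewrite (Hsym (iterT T n y') (iterT T n y)) in *. unfold g in *. lra.
Qed.

Definition orbit_measure (p : X) (n : nat) (B : X -> Prop) : R :=
  / INR n * rsum (fun i => indR (B (iterT T i p))) n.

Lemma orbit_measure_invariant n p :
  (1 <= n)%nat -> Fix T n p -> is_invariant_prob d T (orbit_measure p n).
Proof.
  intros Hn Hp. assert (Hnpos : 0 < INR n) by (apply lt_0_INR; lia).
  unfold orbit_measure. split; [split; [|split]|].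
  - intros B _. apply Rmult_le_pos; [apply Rlt_le, Rinv_0_lt_compat; auto|].
    apply rsum_indR_bounds.
  - rewrite (rsum_ext _ _ (fun _ => 1)) by (intros; apply indR_true; auto).
    rewrite rsum_const. field. lra.
  - intros Bs _ Hdis. apply inf_sum_scal.
    apply (inf_sum_rsum n (fun i j => indR (Bs j (iterT T i p)))).
    intros i. apply inf_sum_exclusive_indicators. intros m k Hmk; apply Hdis; auto.
  - intros B _. f_equal. destruct n as [|n']; [lia|].
    set (f := fun i => indR (B (iterT T i p))).
    change (rsum (fun i => f (S i)) (S n') = rsum f (S n')).
    rewrite rsum_last. simpl rsum at 2.
    assert (Hper : f (S n') = f 0%nat) by (unfold f; rewrite Hp; reflexivity).
    lra.
Qed.

Lemma periodic_point_in_supp n p : (1 <= n)%nat -> Fix T n p -> supp d T p.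
Proof.
  intros Hn Hp C HC Hfull. apply NNPP; intros Hnc.
  specialize (Hfull _ (orbit_measure_invariant n p Hn Hp)).
  unfold orbit_measure in Hfull. destruct n as [|n']; [lia|]. simpl rsum in Hfull.
  rewrite (indR_false (C p)) in Hfull by auto.
  pose proof (rsum_indR_bounds n' (fun i => C (T (iterT T i p)))) as [_ Hle].
  rewrite S_INR in Hfull. pose proof (pos_INR n').
  apply (Rmult_eq_compat_l (INR n' + 1)) in Hfull.
  rewrite <- Rmult_assoc, Rinv_r, Rmult_1_l in Hfull by lra. lra.
Qed.

Lemma supp_in_Fix n :
  (forall r, 0 < r -> forall mu, is_invariant_prob d T mu -> mu (displaced n r) = 0) ->
  forall z, supp d T z -> Fix T n z.
Proof.
  destruct Hmetric as [Hpos [Hsep _]].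
  intros Hnull z Hz. apply NNPP; intros Hnf.
  set (D0 := d z (iterT T n z)).
  assert (HD0 : 0 < D0).
  { destruct (Hpos z (iterT T n z)) as [|Heq]; auto.
    exfalso. apply Hnf. symmetry. apply Hsep. auto. }
  (* the closed set of points moved by at most D0/2 has full measure *)
  apply (Hz (fun y => ~ displaced n (D0 / 2) y)); [| |unfold displaced; fold D0; lra].
  - intros y Hy. apply NNPP in Hy. destruct (displaced_open n (D0 / 2) y Hy) as [e [He H]].
    exists e; split; auto.
  - intros mu [Hmu Hinv]. pose proof Hmu as [_ [H1 _]].
    rewrite <- H1, (mu_split X d mu Hmu (fun _ => True) (displaced n (D0 / 2)));
      auto using Borel_True, Borel_open, displaced_open.
    replace (fun x => True /\ displaced n (D0 / 2) x) with (displaced n (D0 / 2))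
      by (seteq; tauto).
    rewrite Hnull; [|lra|split; auto]. rewrite Rplus_0_l. f_equal. seteq. tauto.
Qed.

(** Frequency of close returns *)

Definition close_return (n : nat) (r : R) (y : X) (k : nat) : Prop :=
  d (iterT T k y) (iterT T n (iterT T k y)) <= r.

Lemma not_close_return n r y k : ~ close_return n r y k <-> displaced n r (iterT T k y).
Proof. unfold close_return, displaced. split; [apply Rnot_le_lt|apply Rlt_not_le]. Qed.

Definition frequent_returns (n : nat) (r lam : R) (N : nat) (y : X) : Prop :=
  forall a L, (N <= L)%nat -> lam * INR L <= INR (count_in (close_return n r y) a L).

(* Failing to return on a given window is an open condition, since each
   missed return is. *)
Lemma frequent_returns_closed n r lam N : is_closed d (frequent_returns n r lam N).
Proof.
  intros y Hy.
  assert (Hex : exists a L, (N <= L)%nat /\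
                  INR (count_in (close_return n r y) a L) < lam * INR L).
  { apply NNPP; intros H. apply Hy. intros a L HL.
    apply Rnot_lt_le. intros H'. apply H; eauto. }
  destruct Hex as [a [L [HL Hlt]]].
  destruct (finite_delta X d (fun i y' => ~ close_return n r y (a + i) ->
                                          ~ close_return n r y' (a + i)) y L)
    as [de [Hde Hd]].
  { intros i _. destruct (classic (close_return n r y (a + i))) as [Hc|Hc].
    - exists 1; split; [lra|tauto].
    - apply not_close_return in Hc.
      destruct (preimage_open (a + i) _ (displaced_open n r) y Hc) as [e [He H]].
      exists e; split; auto. intros y' Hy' _. apply not_close_return, H, Hy'. }
  exists de; split; auto. intros y' Hy' Hfr. specialize (Hfr a L HL).
  assert (Hle : (count_in (close_return n r y') a L <= count_in (close_return n r y) a L)%nat).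
  { apply count_in_shift_mono. intros i Hi Hg.
    apply NNPP. intros Hng. apply (Hd y' Hy' i Hi Hng Hg). }
  apply le_INR in Hle. lra.
Qed.

Lemma proximal_pair_frequent_returns n x y r lam :
  banach_proximal d T x y -> banach_proximal d T x (iterT T n y) -> 0 < r -> lam < 1 ->
  exists N, frequent_returns n r lam N y.
Proof.
  destruct Hmetric as [_ [_ [Hsym Htri]]].
  intros H1 H2 Hr Hl.
  set (F1 := fun k => d (iterT T k x) (iterT T k y) < r / 2).
  set (F2 := fun k => d (iterT T k x) (iterT T k (iterT T n y)) < r / 2).
  destruct (banach_density_one_count F1 (H1 (r / 2) ltac:(lra)) ((1 + lam) / 2) ltac:(lra))
    as [N1 HN1].
  destruct (banach_density_one_count F2 (H2 (r / 2) ltac:(lra)) ((1 + lam) / 2) ltac:(lra))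
    as [N2 HN2].
  exists (Nat.max N1 N2). intros a L HL.
  specialize (HN1 a L ltac:(lia)). specialize (HN2 a L ltac:(lia)).
  (* a time that is not a close return misses F1 or F2, by the triangle inequality *)
  assert (Hmiss : (count_in (fun k => ~ close_return n r y k) a L <=
                   count_in (fun k => ~ F1 k) a L + count_in (fun k => ~ F2 k) a L)%nat).
  { eapply Nat.le_trans; [|apply count_in_or]. apply count_in_mono. intros k Hk.
    apply NNPP; intros H. apply not_or_and in H. destruct H as [Ha Hb].
    apply NNPP in Ha, Hb. apply Hk. unfold close_return, F1, F2 in *.
    rewrite iter_comm in Hb.
    pose proof (Htri (iterT T k y) (iterT T k x) (iterT T n (iterT T k y))).
    rewrite (Hsym (iterT T k y) (iterT T k x)) in *. lra. }
  apply le_INR in Hmiss. rewrite plus_INR in Hmiss.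
  rewrite count_in_compl_INR in HN1, HN2 |- *. lra.
Qed.

Hypothesis Htrans : is_transitive d T.

(* Transitivity spreads frequent returns from a ball to the whole space: on a
   window of length L, the orbit of any w is shadowed by a piece of the orbit
   of some point of the ball. *)
Lemma frequent_returns_everywhere n eps lam N c rho :
  0 < eps -> 0 < rho -> (forall z, d c z < rho -> frequent_returns n eps lam N z) ->
  forall w L, (N <= L)%nat ->
    lam * INR L <= INR (count_in (close_return n (3 * eps) w) 0 L).
Proof.
  intros He Hrho Hball w L HL.
  destruct (finite_delta X d (fun i z => d (iterT T i w) (iterT T i z) < eps /\
       d (iterT T n (iterT T i w)) (iterT T n (iterT T i z)) < eps) w L) as [de [Hde Hd]].
  { intros i _. destruct (iter_cont i w eps He) as [d1 [Hd1 H1]].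
    destruct (iter_cont (n + i) w eps He) as [d2 [Hd2 H2]].
    exists (Rmin d1 d2); split; [apply Rmin_glb_lt; auto|].
    intros z Hz. rewrite !iter_add.
    split; [apply H1|apply H2]; eapply Rlt_le_trans; eauto; [apply Rmin_l|apply Rmin_r]. }
  destruct (Htrans (fun z => d c z < rho) (fun z => d w z < de)
              (ball_open X d Hmetric c rho) (ball_open X d Hmetric w de)
              (ex_intro _ c (ball_center X d Hmetric c rho Hrho))
              (ex_intro _ w (ball_center X d Hmetric w de Hde)) 0%nat)
    as [m [_ [z [Hz Hzm]]]].
  eapply Rle_trans; [exact (Hball z Hz m L HL)|]. apply le_INR, count_in_shift_mono.
  intros i Hi Hret. destruct (Hd _ Hzm i Hi) as [A1 A2].
  assert (Hshift : iterT T i (iterT T m z) = iterT T (m + i) z)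
    by (rewrite iter_add, Nat.add_comm; reflexivity).
  rewrite Hshift in A1, A2. unfold close_return in *. rewrite Nat.add_0_l.
  set (z' := iterT T (m + i) z) in *.
  destruct Hmetric as [_ [_ [Hsym Htri]]].
  pose proof (Htri (iterT T i w) z' (iterT T n (iterT T i w))).
  pose proof (Htri z' (iterT T n z') (iterT T n (iterT T i w))).
  rewrite (Hsym (iterT T n z') (iterT T n (iterT T i w))) in *. lra.
Qed.

Definition uniformly_frequent_returns (n : nat) (r : R) : Prop :=
  forall lam, lam < 1 -> exists L, (1 <= L)%nat /\
    forall w, lam * INR L <= INR (count_in (close_return n r w) 0 L).

Hypothesis Hcpt : is_compact d.

(* Baire's theorem produces a ball on which the density bounds are
   uniform, and transitivity spreads them everywhere. *)
Lemma proximal_open_set_returns n x (W : X -> Prop) :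
  is_open d W -> (exists y, W y) ->
  (forall y, W y -> banach_proximal d T x y /\ banach_proximal d T x (iterT T n y)) ->
  forall r, 0 < r -> uniformly_frequent_returns n r.
Proof.
  intros HW HWne HBP r Hr lam Hl.
  destruct (baire X d Hmetric Hcpt W (fun N => frequent_returns n (r / 3) lam N) HW HWne)
    as [N [c [rho [Hrho Hball]]]].
  - intros N; apply frequent_returns_closed.
  - intros y Hy. destruct (HBP y Hy).
    apply (proximal_pair_frequent_returns n x); auto; lra.
  - exists (Nat.max N 1). split; [lia|]. intros w.
    replace r with (3 * (r / 3)) by field.
    apply (frequent_returns_everywhere n (r / 3) lam N c rho); auto; [lra|lia].
Qed.

(* Invariant measures do not charge the displaced set when close returns are
   uniformly frequent: by invariance the sets T^-k(displaced), k < L, all have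
   its measure, while each point lies in few of them. *)
Lemma displaced_null n r : uniformly_frequent_returns n r ->
  forall mu, is_invariant_prob d T mu -> mu (displaced n r) = 0.
Proof.
  intros Hu mu [Hmu Hinv].
  set (V := displaced n r). set (A := fun k w => V (iterT T k w)).
  assert (HA : forall k, is_Borel d (A k))
    by (intros k; apply Borel_open, preimage_open, displaced_open).
  assert (HmuA : forall k, mu (fun w => A k w /\ True) = mu V).
  { intros k. replace (fun w => A k w /\ True) with (A k) by (seteq; tauto).
    induction k as [|k IH]; [reflexivity|].
    rewrite <- IH, <- (Hinv (A k) (HA k)). f_equal. seteq.
    unfold A, iterT. rewrite Nat.iter_succ_r. tauto. }
  assert (H0 : 0 <= mu V) by (apply (mu_nonneg X d mu Hmu), Borel_open, displaced_open).
  assert (Hle : forall lam, lam < 1 -> mu V <= 1 - lam).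
  { intros lam Hl. destruct (Hu lam Hl) as [L [HL HLw]].
    pose proof (measure_multiplicity_bound X d mu Hmu L A HA ((1 - lam) * INR L)
                  (fun _ => True) (Borel_True X d)) as Hmb.
    rewrite (rsum_ext _ _ (fun _ => mu V)), rsum_const in Hmb by (intros; apply HmuA).
    destruct Hmu as [_ [H1 _]]. rewrite H1 in Hmb.
    assert (HLp : 0 < INR L) by (apply lt_0_INR; lia).
    assert (INR L * mu V <= (1 - lam) * INR L * 1); [|nra].
    apply Hmb. intros w _. specialize (HLw w). rewrite count_in_compl_INR in HLw.
    assert (Hcm : (count_in (fun k => A k w) 0 L <=
                   count_in (fun k => ~ close_return n r w k) 0 L)%nat).
    { apply count_in_mono. intros k Hk. apply not_close_return. exact Hk. }
    apply le_INR in Hcm. lra. }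
  destruct (Req_dec (mu V) 0) as [|Hne]; auto.
  specialize (Hle (1 - mu V / 2) ltac:(lra)). lra.
Qed.

End Dynamics.


Theorem mainTheorem13 (X : Type) (d : X -> X -> R) (T : X -> X)
  (Hmetric : is_metric d) (Hne : inhabited X) (Hcpt : is_compact d)
  (Hcont : is_continuous d T) (Htrans : is_transitive d T)
  (Hsupp : forall n : nat, (1 <= n)%nat -> ~ (forall x, supp d T x <-> Fix T n x)) :
  forall x : X, empty_interior d (BP d T x).
Proof.
  intros x U HU Hsub y0 Hy0.
  (* a return time n >= 1 of U to itself *)
  destruct (Htrans U U HU HU (ex_intro _ y0 Hy0) (ex_intro _ y0 Hy0) 1%nat)
    as [n [Hn [y1 [Hy1 Hy1n]]]].
  set (W := fun y => U y /\ U (iterT T n y)).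
  assert (HW : is_open d W) by (apply open_and, preimage_open; auto).
  assert (HBP : forall y, W y -> BP d T x y /\ BP d T x (iterT T n y))
    by (intros y [Hy Hyn]; split; apply Hsub; auto).
  (* then supp(X, T) = Fix(X, T^n), contradicting the hypothesis *)
  apply (Hsupp n Hn). intros z. split.
  - apply (supp_in_Fix X d T Hmetric Hcont n). intros r Hr.
    apply (displaced_null X d T Hmetric Hcont n r).
    apply (proximal_open_set_returns X d T Hmetric Hcont Htrans Hcpt n x W HW); auto.
    exists y1. split; auto.
  - apply periodic_point_in_supp, Hn.
Qed.
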